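(* Let $(\varpi,\nu)$ be sub-consistent, where $\varpi$ is a finite measure on $\mathcal X\times\mathcal X$ and $\nu$ a probability measure on $\mathcal X\times\mathcal X^*$ with $\int n\,d\nu<\infty$. Then there exists a sequence $(\hat\varpi_n,\hat\nu_n)\in\mathcal M_s$ such that (i) each $(\hat\varpi_n,\hat\nu_n)$ is consistent, and (ii) $(\hat\varpi_n,\hat\nu_n)\to(\varpi,\nu)$ as $n\to\infty$.
   Context: $\mathcal X$ is a finite alphabet, $\mathcal X^*=\bigcup_{n\ge0}\{n\}\times\mathcal X^n$ with elements $c=(n,a_1,\dots,a_n)$, $m(a,c)=\sum_i\mathbf 1\{a_i=a\}$. $(\varpi,\nu)$ is sub-consistent if $\varpi(a,b)\ge\sum_{c\in\mathcal X^*}m(b,c)\nu(a,c)$ for all $a,b\in\mathcal X$, consistent if equality holds for all $a,b$. $\mathcal M_s$ is the set of sub-consistent pairs in (finite measures on $\mathcal X\times\mathcal X$) $\times$ (probability measures $\nu$ on $\mathcal X\times\mathcal X^*$ with $\int n\,d\nu<\infty$), with the weak topology; convergence is in this topology. *)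

From HB Require Import structures.
From mathcomp Require Import all_boot all_order all_algebra.
From mathcomp Require Import all_classical all_reals all_analysis.
Set Implicit Arguments. Unset Strict Implicit. Unset Printing Implicit Defensive.
Import Order.TTheory GRing.Theory Num.Theory.
Import numFieldNormedType.Exports.
Local Open Scope classical_set_scope.
Local Open Scope ring_scope.

(* X^* = \bigcup_{n>=0} {n} x X^n : elements c = (n, a_1, ..., a_n). *)
Definition Xstar (X : finType) : Type := {n : nat & n.-tuple X}.

Definition xlen (X : finType) (c : Xstar X) : nat := projT1 c.

Definition mult (X : finType) (a : X) (c : Xstar X) : nat :=
  count_mem a (tval (projT2 c)).

(* A finite measure on X x X (X finite, discrete): a nonnegative mass function. *)
Definition finmeasXX (R : realType) (X : finType) (w : X -> X -> R) : Prop :=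
  forall a b, 0 <= w a b.

(* A probability measure on the countable discrete space X x X^*,
   given by its (nonnegative, total mass 1) mass function. *)
Definition probXXs (R : realType) (X : finType) (nu : X -> Xstar X -> R) : Prop :=
  (forall a c, 0 <= nu a c) /\
  (\esum_(t in [set: X * Xstar X]) (nu t.1 t.2)%:E = 1)%E.

Definition finite_mean_len (R : realType) (X : finType) (nu : X -> Xstar X -> R) : Prop :=
  (\esum_(t in [set: X * Xstar X]) ((xlen t.2)%:R * nu t.1 t.2)%:E < +oo)%E.

Definition msum (R : realType) (X : finType) (nu : X -> Xstar X -> R) (a b : X) : \bar R :=
  \esum_(c in [set: Xstar X]) ((mult b c)%:R * nu a c)%:E.

Definition sub_consistent (R : realType) (X : finType)
  (w : X -> X -> R) (nu : X -> Xstar X -> R) : Prop :=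
  forall a b, (msum nu a b <= (w a b)%:E)%E.

Definition consistent (R : realType) (X : finType)
  (w : X -> X -> R) (nu : X -> Xstar X -> R) : Prop :=
  forall a b, msum nu a b = (w a b)%:E.

Definition in_Ms (R : realType) (X : finType)
  (w : X -> X -> R) (nu : X -> Xstar X -> R) : Prop :=
  [/\ finmeasXX w, probXXs nu, finite_mean_len nu & sub_consistent w nu].

Definition integ (R : realType) (X : finType)
  (nu : X -> Xstar X -> R) (f : X -> Xstar X -> R) : R :=
  fine (\esum_(t in [set: X * Xstar X]) ((Num.max (f t.1 t.2) 0) * nu t.1 t.2)%:E)%E
  - fine (\esum_(t in [set: X * Xstar X]) ((Num.max (- f t.1 t.2) 0) * nu t.1 t.2)%:E)%E.

(* Weak convergence of measures on the discrete space X x X^*: every bounded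
   (hence continuous) function is integrated convergently. *)
Definition weak_cvg (R : realType) (X : finType)
  (nus : nat -> X -> Xstar X -> R) (nu : X -> Xstar X -> R) : Prop :=
  forall f : X -> Xstar X -> R, (exists M : R, forall a c, `|f a c| <= M) ->
    (fun k => integ (nus k) f) @ \oo --> integ nu f.

(* Weak convergence of finite measures on the finite discrete space X x X
   (equivalently, convergence of every mass). *)
Definition weak_cvgXX (R : realType) (X : finType)
  (ws : nat -> X -> X -> R) (w : X -> X -> R) : Prop :=
  forall a b, (fun k => ws k a b) @ \oo --> w a b.

From Pilot Require Import Defs.
From HB Require Import structures.
From mathcomp Require Import all_boot all_order all_algebra.
From mathcomp Require Import all_classical all_reals all_analysis.
From mathcomp Require Import lra.
Set Implicit Arguments. Unset Strict Implicit. Unset Printing Implicit Defensive.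
Import Order.TTheory GRing.Theory Num.Theory.
Import numFieldNormedType.Exports.
Local Open Scope classical_set_scope.
Local Open Scope ring_scope.

(* Mix nu with point masses: with eps_k = 1/(k+1) and eta_k = eps_k/|X|, put
   nu_k(a, c) = (1 - eps_k) nu(a, c) + eta_k [c = c_k(a)], where the word c_k(a)
   contains each letter b exactly n_k(a, b) = floor((w(a,b) - F(a,b)) / eta_k)
   times and F(a, b) = sum_c m(b, c) nu(a, c) <= w(a, b).  The pair is consistent
   for w_k(a, b) := (1 - eps_k) F(a, b) + eta_k n_k(a, b), which lies within
   eps_k F(a, b) + eta_k of w(a, b); and any integral of a bounded function
   moves by O(eps_k) when nu is replaced by nu_k. *)

Section ExtendedSums.
Variable R : realType.

Lemma esumZl (T : choiceType) (S : set T) (a : T -> \bar R) (c : R) :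
  0 <= c -> (forall x, S x -> (0 <= a x)%E) ->
  (\esum_(i in S) (c%:E * a i) = c%:E * \esum_(i in S) a i)%E.
Proof.
move=> c0 a0; rewrite /esum -ereal_supZl//; last first.
  by apply/set0P; exists 0%E; exists set0 => //; [exact: fsets_set0|rewrite fsbig_set0].
congr ereal_sup; apply/seteqP; split=> x /=.
  move=> [A [finA AS] <-]; exists (\sum_(i \in A) a i)%E; first by exists A.
  rewrite !fsbig_finite// !big_seq ge0_sume_distrr// => i.
  by rewrite in_fset_set// inE => /AS /a0.
move=> [y [A [finA AS] <-] <-]; exists A => //.
rewrite !fsbig_finite// !big_seq ge0_sume_distrr// => i.
by rewrite in_fset_set// inE => /AS /a0.
Qed.

Lemma esum_dirac (T : choiceType) (t0 : T) (v : R) : 0 <= v ->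
  (\esum_(t in [set: T]) ((t == t0)%:R * v)%:E = v%:E)%E.
Proof.
move=> v0; have -> : v%:E = (\esum_(t in [set t0]) ((t == t0)%:R * v)%:E)%E.
  by rewrite esum_set1 ?eqxx ?mul1r ?lee_fin.
rewrite [RHS]esum_mkcond; apply: eq_esum => t _.
by case: eqP => [->|ne]; [rewrite mem_set | rewrite memNset ?mul0r].
Qed.

Lemma esum_mixture (T : choiceType) (s : seq T) (g p : T -> R) (e v : R) :
  0 <= e -> 0 <= v -> (forall t, 0 <= g t) -> (forall t, 0 <= p t) ->
  (\esum_(t in [set: T]) (g t * p t)%:E)%E \is a fin_num ->
  (\esum_(t in [set: T]) (g t * (e * p t + \sum_(u <- s) (t == u)%:R * v))%:E =
   (e * fine (\esum_(t in [set: T]) (g t * p t)%:E) + \sum_(u <- s) g u * v)%:E)%E.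
Proof.
move=> e0 v0 g0 p0 fin.
transitivity (\esum_(t in [set: T]) (e%:E * (g t * p t)%:E +
   \sum_(u <- s) ((t == u)%:R * (g u * v))%:E))%E.
  apply: eq_esum => t _; rewrite sumEFin -EFinM -EFinD mulrDr mulrCA big_distrr.
  congr (EFin (_ + _)); apply: eq_bigr => u _ /=.
  by case: eqP => [->|_]; rewrite ?mul1r ?mul0r ?mulr0.
rewrite esumD; last 2 first.
- by move=> t _; rewrite mule_ge0 // lee_fin mulr_ge0.
- by move=> t _; rewrite sume_ge0 // => u _; rewrite lee_fin !mulr_ge0.
rewrite esumZl//; last by move=> t _; rewrite lee_fin mulr_ge0.
rewrite esum_sum; last by move=> t u _ _; rewrite lee_fin !mulr_ge0.
under eq_bigr do rewrite esum_dirac ?mulr_ge0//.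
by rewrite sumEFin -(fineK fin) -EFinM -EFinD fineK.
Qed.

Lemma fine_bounded (x : \bar R) (y : R) :
  (0 <= x)%E -> (x <= y%:E)%E -> x \is a fin_num /\ 0 <= fine x <= y.
Proof. by case: x => [r| |] //=; rewrite !lee_fin => -> ->. Qed.

End ExtendedSums.

Lemma cvg_dist_le_harmonic (R : realType) (x : nat -> R) (L C : R) :
  (forall k, `|x k - L| <= C * k.+1%:R^-1) -> x @ \oo --> L.
Proof.
move=> xL.
have harmonicC : (fun k => C * k.+1%:R^-1) @ \oo --> 0.
  by rewrite -(mulr0 C); apply: cvgM; [exact: cvg_cst|exact: cvg_harmonic].
have lower : (fun k => L - C * k.+1%:R^-1) @ \oo --> L.
  by rewrite -[X in _ --> X]subr0; apply: cvgB => //; exact: cvg_cst.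
have upper : (fun k => L + C * k.+1%:R^-1) @ \oo --> L.
  by rewrite -[X in _ --> X]addr0; apply: cvgD => //; exact: cvg_cst.
apply: (squeeze_cvgr _ lower upper); near=> k.
by move: (xL k); rewrite ler_distl.
Unshelve. all: by end_near.
Qed.

Lemma max0_bounded (R : realDomainType) (x M : R) : `|x| <= M -> 0 <= Num.max x 0 <= M.
Proof.
move=> xM; have M0 := le_trans (normr_ge0 x) xM.
by move: xM; rewrite ler_norml le_max lexx orbT ge_max M0 andbT => /andP[].
Qed.

Lemma count_mem_flatten_nseq (X : finType) (n : X -> nat) (b : X) :
  count_mem b (flatten [seq nseq (n b') b' | b' <- enum X]) = n b.
Proof.
rewrite count_flatten -map_comp sumnE big_map big_enum /=.
rewrite (bigD1 b) //= count_nseq /= eqxx mul1n big1 ?addn0 // => j /negbTE jb.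
by rewrite count_nseq /= jb.
Qed.

Lemma probXXs_card_gt0 (R : realType) (X : finType) (nu : X -> Xstar X -> R) :
  probXXs nu -> (0 < #|X|)%N.
Proof.
move=> [_ nu1]; rewrite lt0n; apply/negP => /eqP/card0_eq X0.
move: nu1; rewrite esum1; last by move=> -[a c] _; have := X0 a; rewrite !inE.
by move=> /(congr1 fine)/eqP; rewrite /= eq_sym oner_eq0.
Qed.

Section Approximation.
Variables (R : realType) (X : finType) (w : X -> X -> R) (nu : X -> Xstar X -> R).
Hypothesis card_gt0 : (0 < #|X|)%N.
Hypothesis nu_ge0 : forall a c, 0 <= nu a c.
Hypothesis nu_mass1 : (\esum_(t in [set: X * Xstar X]) (nu t.1 t.2)%:E = 1)%E.
Hypothesis sub_cons : sub_consistent w nu.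

Definition eps (k : nat) : R := k.+1%:R^-1.
Definition eta k : R := eps k / #|X|%:R.
Definition mean_mult a b : R := fine (Defs.msum nu a b).
Definition nfill k a b : nat := Num.truncn ((w a b - mean_mult a b) / eta k).
Definition word_of_seq (s : seq X) : Xstar X := existT _ (size s) (in_tuple s).
Definition cfill k a : Xstar X :=
  word_of_seq (flatten [seq nseq (nfill k a b) b | b <- enum X]).
Definition nu_approx k a c : R := (1 - eps k) * nu a c + (c == cfill k a)%:R * eta k.
Definition w_approx k a b : R := (1 - eps k) * mean_mult a b + eta k * (nfill k a b)%:R.

Lemma mult_cfill k a b : Defs.mult b (cfill k a) = nfill k a b.
Proof. exact: count_mem_flatten_nseq. Qed.

Lemma eps_gt0 k : 0 < eps k. Proof. by rewrite invr_gt0. Qed.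

Lemma one_minus_eps_ge0 k : 0 <= 1 - eps k.
Proof. by rewrite subr_ge0 invf_le1 // ler1n. Qed.

Lemma eta_gt0 k : 0 < eta k.
Proof. by rewrite divr_gt0 ?eps_gt0 ?ltr0n. Qed.

Lemma eta_le_eps k : eta k <= eps k.
Proof. by rewrite ler_pdivrMr ?ltr0n // ler_peMr ?ler1n // ltW ?eps_gt0. Qed.

Lemma sum_eta k : \sum_(x <- enum X) eta k = eps k.
Proof.
by rewrite big_enum sumr_const -mulr_natr mulfVK // pnatr_eq0 -lt0n; apply: card_gt0.
Qed.

Lemma nu_approx_ge0 k a c : 0 <= nu_approx k a c.
Proof.
apply: addr_ge0; apply: mulr_ge0;
  [exact: one_minus_eps_ge0 | exact: nu_ge0 | exact: ler0n | exact: ltW (eta_gt0 k)].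
Qed.

Lemma msum_bounded a b : Defs.msum nu a b \is a fin_num /\ 0 <= mean_mult a b <= w a b.
Proof.
by apply: fine_bounded (sub_cons a b); apply: esum_ge0 => c _; rewrite lee_fin mulr_ge0.
Qed.

Lemma w_approx_ge0 k a b : 0 <= w_approx k a b.
Proof.
have /andP[F0 _] := (msum_bounded a b).2.
by apply: addr_ge0; apply: mulr_ge0;
  [exact: one_minus_eps_ge0 | exact: F0 | exact: ltW (eta_gt0 k) | exact: ler0n].
Qed.

Lemma esum_nu_approx_row k a (g : Xstar X -> R) : (forall c, 0 <= g c) ->
  (\esum_(c in [set: Xstar X]) (g c * nu a c)%:E)%E \is a fin_num ->
  (\esum_(c in [set: Xstar X]) (g c * nu_approx k a c)%:E =
   ((1 - eps k) * fine (\esum_(c in [set: Xstar X]) (g c * nu a c)%:E)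
    + g (cfill k a) * eta k)%:E)%E.
Proof.
move=> g0 fin; have := esum_mixture [:: cfill k a] (one_minus_eps_ge0 k)
  (ltW (eta_gt0 k)) g0 (nu_ge0 a) fin.
by rewrite !big_seq1 => <-; apply: eq_esum => c _; rewrite big_seq1.
Qed.

Lemma nu_approx_atoms k (t : X * Xstar X) :
  (t.2 == cfill k t.1)%:R = \sum_(u <- [seq (x, cfill k x) | x <- enum X]) (t == u)%:R :> R.
Proof.
case: t => a c /=; rewrite big_map big_enum /= (bigD1 a) //= big1 ?addr0.
- by rewrite xpair_eqE eqxx.
- by move=> x /negbTE xa; rewrite xpair_eqE eq_sym xa.
Qed.

Lemma esum_nu_approx k (g : X * Xstar X -> R) : (forall t, 0 <= g t) ->
  (\esum_(t in [set: X * Xstar X]) (g t * nu t.1 t.2)%:E)%E \is a fin_num ->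
  (\esum_(t in [set: X * Xstar X]) (g t * nu_approx k t.1 t.2)%:E =
   ((1 - eps k) * fine (\esum_(t in [set: X * Xstar X]) (g t * nu t.1 t.2)%:E)
    + \sum_(x <- enum X) g (x, cfill k x) * eta k)%:E)%E.
Proof.
move=> g0 fin.
have := esum_mixture [seq (x, cfill k x) | x <- enum X] (one_minus_eps_ge0 k)
  (ltW (eta_gt0 k)) g0 (fun t => nu_ge0 t.1 t.2) fin.
rewrite big_map => <-; apply: eq_esum => t _.
by rewrite /nu_approx nu_approx_atoms big_distrl.
Qed.

Lemma esum_bounded_fin_num (g : X * Xstar X -> R) (M : R) :
  (forall t, 0 <= g t <= M) ->
  (\esum_(t in [set: X * Xstar X]) (g t * nu t.1 t.2)%:E)%E \is a fin_num.
Proof.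
move=> gM; have M0 : 0 <= M.
  have [a _] := card_gt0P card_gt0.
  by have /andP[g0 gM0] := gM (a, word_of_seq [::]); exact: le_trans gM0.
have le : (\esum_(t in [set: X * Xstar X]) (g t * nu t.1 t.2)%:E <=
           \esum_(t in [set: X * Xstar X]) (M%:E * (nu t.1 t.2)%:E))%E.
  by apply: le_esum => t _; rewrite -EFinM lee_fin ler_wpM2r //; case/andP: (gM t).
rewrite esumZl ?nu_mass1 ?mule1 // in le; last by move=> t _; rewrite lee_fin.
apply: (fine_bounded _ le).1; apply: esum_ge0 => t _.
by rewrite lee_fin mulr_ge0 //; case/andP: (gM t).
Qed.

Lemma nu_approx_prob k : probXXs (nu_approx k).
Proof.
split; first exact: nu_approx_ge0.
transitivity (\esum_(t in [set: X * Xstar X]) ((fun=> 1) t * nu_approx k t.1 t.2)%:E)%E.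
  by apply: eq_esum => t _; rewrite mul1r.
rewrite esum_nu_approx //; last by under eq_esum do rewrite mul1r; rewrite nu_mass1.
under eq_esum do rewrite mul1r.
rewrite nu_mass1 /= mulr1; under eq_bigr do rewrite mul1r.
by rewrite sum_eta subrK.
Qed.

Lemma nu_approx_finite_mean k : finite_mean_len nu -> finite_mean_len (nu_approx k).
Proof.
move=> fm; rewrite /finite_mean_len (esum_nu_approx k (g := fun t => (xlen t.2)%:R)) ?ltry //.
by rewrite ge0_fin_numE // esum_ge0 // => t _; rewrite lee_fin mulr_ge0.
Qed.

Lemma nu_approx_consistent k : consistent (w_approx k) (nu_approx k).
Proof.
move=> a b; rewrite /Defs.msum.
rewrite (esum_nu_approx_row k (a := a) (g := fun c => (Defs.mult b c)%:R)) //; last first.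
  exact: (msum_bounded a b).1.
by rewrite mult_cfill /w_approx /mean_mult /Defs.msum (mulrC (eta k)).
Qed.

Lemma w_approx_cvg : weak_cvgXX w_approx w.
Proof.
move=> a b; apply: (cvg_dist_le_harmonic (C := mean_mult a b + 1)) => k.
change k.+1%:R^-1 with (eps k).
have /andP[F0 Fw] := (msum_bounded a b).2.
have gap_ge0 : 0 <= (w a b - mean_mult a b) / eta k.
  by rewrite divr_ge0 ?subr_ge0 // ltW ?eta_gt0.
have /andP[lo hi] := truncn_itv gap_ge0.
rewrite ler_pdivlMr ?eta_gt0 // in lo; rewrite ltr_pdivrMr ?eta_gt0 // -natr1 in hi.
have epsF : 0 <= eps k * mean_mult a b by rewrite mulr_ge0 // ltW ?eps_gt0.
have := eta_le_eps k; rewrite /w_approx /nfill => eta_eps.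
by rewrite ler_norml; apply/andP; split; lra.
Qed.

Lemma esum_nu_approx_dist (g : X * Xstar X -> R) (M : R) k :
  (forall t, 0 <= g t <= M) ->
  `|fine (\esum_(t in [set: X * Xstar X]) (g t * nu_approx k t.1 t.2)%:E) -
    fine (\esum_(t in [set: X * Xstar X]) (g t * nu t.1 t.2)%:E)| <=
  (fine (\esum_(t in [set: X * Xstar X]) (g t * nu t.1 t.2)%:E) + M) * eps k.
Proof.
move=> gM; have g0 t : 0 <= g t by case/andP: (gM t).
rewrite (esum_nu_approx k g0 (esum_bounded_fin_num gM)) /=.
set P := fine _; set S := \sum_(_ <- _) _.
have S0 : 0 <= S by rewrite sumr_ge0 // => x _; rewrite mulr_ge0 // ltW ?eta_gt0.
have SM : S <= M * eps k.
  rewrite -(sum_eta k) big_distrr /=; apply: ler_sum => x _.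
  by rewrite ler_wpM2r ?(ltW (eta_gt0 k)) //; case/andP: (gM (x, cfill k x)).
have P0 : 0 <= P by rewrite fine_ge0 // esum_ge0 // => t _; rewrite lee_fin mulr_ge0.
have epsP : 0 <= eps k * P by rewrite mulr_ge0 // ltW ?eps_gt0.
by rewrite ler_norml; apply/andP; split; lra.
Qed.

Lemma nu_approx_weak_cvg : weak_cvg nu_approx nu.
Proof.
move=> f [M fM].
have pos t : 0 <= Num.max (f t.1 t.2) 0 <= M := max0_bounded (fM t.1 t.2).
have neg t : 0 <= Num.max (- f t.1 t.2) 0 <= M.
  by apply: max0_bounded; rewrite normrN.
apply: (cvg_dist_le_harmonic (C :=
  fine (\esum_(t in [set: X * Xstar X]) (Num.max (f t.1 t.2) 0 * nu t.1 t.2)%:E) + M +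
  (fine (\esum_(t in [set: X * Xstar X]) (Num.max (- f t.1 t.2) 0 * nu t.1 t.2)%:E) + M)))
  => k.
change k.+1%:R^-1 with (eps k).
have := esum_nu_approx_dist k pos; have := esum_nu_approx_dist k neg.
have := eps_gt0 k; rewrite /integ mulrDl !ler_norml.
by move=> eps0 /andP[negl negu] /andP[posl posu]; apply/andP; split; lra.
Qed.

End Approximation.

Lemma consistent_sub_consistent (R : realType) (X : finType)
  (w : X -> X -> R) (nu : X -> Xstar X -> R) :
  consistent w nu -> sub_consistent w nu.
Proof. by move=> cons a b; rewrite cons. Qed.

Theorem lemma3p7 (R : realType) (X : finType)
  (w : X -> X -> R) (nu : X -> Xstar X -> R) :
  in_Ms w nu ->
  exists (ws : nat -> X -> X -> R) (nus : nat -> X -> Xstar X -> R),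
    (forall k, in_Ms (ws k) (nus k)) /\
    (forall k, consistent (ws k) (nus k)) /\
    weak_cvgXX ws w /\ weak_cvg nus nu.
Proof.
move=> [w_ge0 nu_prob nu_fm sub_cons].
have card_gt0 := probXXs_card_gt0 nu_prob; case: nu_prob => nu_ge0 nu_mass1.
have cons k := nu_approx_consistent card_gt0 nu_ge0 sub_cons k.
exists (w_approx w nu), (nu_approx w nu); split; last split; last split.
- move=> k; split.
  + exact: w_approx_ge0.
  + exact: nu_approx_prob.
  + exact: nu_approx_finite_mean.
  + exact: consistent_sub_consistent.
- exact: cons.
- exact: w_approx_cvg.
- exact: nu_approx_weak_cvg.
Qed.
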